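(* Let $\sigma$ and $\sigma'$ be two distinct translated copies of a regular $k$-gon in $\mathbb{R}^2$, $k\ge 4$, whose interiors have a non-empty intersection. Let $p$ be any point in $\sigma\cap\sigma'$. Let $x$ and $y$ be two points of $\partial\sigma\cap\partial\sigma'$ lying in two different connected components of $\partial\sigma\cap\partial\sigma'$. Then the angle $\angle xpy$ of the triangle $\triangle xpy$ is at least $\frac{\pi}{4}$.
   Context: $\partial\sigma$ denotes the boundary of $\sigma$. A connected component of a set is a maximal connected subset of it. *)

From HB Require Import structures.
From mathcomp Require Import all_boot all_order all_algebra.
From mathcomp Require Import all_classical all_reals all_analysis.
Set Implicit Arguments. Unset Strict Implicit. Unset Printing Implicit Defensive.
Import Order.TTheory GRing.Theory Num.Theory.
Import numFieldNormedType.Exports.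
Local Open Scope classical_set_scope.
Local Open Scope ring_scope.

Section Defs.
Variable R : realType.
Notation P := (R * R)%type.

Definition rpoly_vertex (k : nat) (c : P) (r th : R) (j : nat) : P :=
  (c.1 + r * cos (th + 2 * pi * j%:R / k%:R),
   c.2 + r * sin (th + 2 * pi * j%:R / k%:R)).

Definition regular_polygon (k : nat) (c : P) (r th : R) : set P :=
  [set z | exists l : 'I_k -> R,
     (forall j, 0 <= l j) /\ \sum_(j < k) l j = 1 /\
     z = (\sum_(j < k) l j * (rpoly_vertex k c r th j).1,
          \sum_(j < k) l j * (rpoly_vertex k c r th j).2)].

Definition is_regular_kgon (k : nat) (S : set P) : Prop :=
  exists (c : P) (r th : R), 0 < r /\ S = regular_polygon k c r th.

Definition translate (t : P) (S : set P) : set P :=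
  [set z | exists2 w, S w & z = (w.1 + t.1, w.2 + t.2)].

Definition boundary (S : set P) : set P := closure S `\` interior S.

Definition dot (u v : P) : R := u.1 * v.1 + u.2 * v.2.
Definition vsub (u v : P) : P := (u.1 - v.1, u.2 - v.2).
Definition vnorm (u : P) : R := Num.sqrt (dot u u).

Definition angle (x p y : P) : R :=
  acos (dot (vsub x p) (vsub y p) / (vnorm (vsub x p) * vnorm (vsub y p))).
End Defs.

(* Both polygons are intersections of k half-planes [dot n_j (z - c) <= rho], with rho the
   apothem, and for k >= 4 they lie in the disc of radius sqrt 2 * rho about their centre.
   Measure the height of a point z by [cross t z], proportional to its signed distance to
   the line through the origin parallel to the translation t. On every line parallel to t
   the two polygons cut out intervals that are translates of each other, so common boundary
   points at a given height form a segment, and no common boundary point is strictly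
   between, in height, a common interior point and a common point. Hence x and y lie on
   either side, in height, of the common interior, and p lies between them.
   If x - p and y - p point to opposite sides along t, the angle is obtuse. Otherwise, say
   both point forward: x and y then lie on edges of the translated polygon facing against t.
   On the line of such an edge, the point at distance rho from the foot of the apothem lies
   beyond x and on the circle of radius sqrt 2 * rho; replacing x and y by these two corners
   can only shrink the angle at p, and since the corners are at least a right angle apart
   seen from the centre while p is inside the circle, the inscribed angle theorem bounds the
   angle below by pi/4. *)

From HB Require Import structures.
From mathcomp Require Import all_boot all_order all_algebra.
From mathcomp Require Import all_classical all_reals all_analysis.
From mathcomp Require Import ring lra.
Import Order.TTheory GRing.Theory Num.Theory.
Import numFieldNormedType.Exports.
Local Open Scope classical_set_scope.
Local Open Scope ring_scope.
Set Implicit Arguments. Unset Strict Implicit. Unset Printing Implicit Defensive.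

Section PlaneVectors.
Variable R : realType.
Implicit Types a b e f w x y p : R * R.

Definition cross a b : R := a.1 * b.2 - a.2 * b.1.

Lemma dotC a b : dot a b = dot b a.
Proof. by rewrite /dot mulrC (mulrC a.2). Qed.

Lemma normr_crossC a b : `|cross a b| = `|cross b a|.
Proof. by rewrite -normrN /cross opprB (mulrC a.1) (mulrC a.2). Qed.

Lemma dot_cross_sqr a b : dot a a * dot b b = dot a b ^+ 2 + cross a b ^+ 2.
Proof. by rewrite /dot /cross; ring. Qed.

Lemma dotNl a b : dot (- a) b = - dot a b.
Proof. by rewrite /dot /=; ring. Qed.

Lemma crossNl a b : cross (- a) b = - cross a b.
Proof. by rewrite /cross /=; ring. Qed.

Lemma cross_vsubr a x y : cross a (vsub x y) = cross a x - cross a y.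
Proof. by rewrite /cross /vsub /=; ring. Qed.

Lemma dot_expand_along w a b : dot w w * dot a b = dot w a * dot w b + cross w a * cross w b.
Proof. by rewrite /dot /cross; ring. Qed.

Lemma dot_self_ge0 a : 0 <= dot a a.
Proof. by rewrite /dot -!expr2 addr_ge0 ?sqr_ge0. Qed.

Lemma dot_self_eq0 a : (dot a a == 0) = (a == (0, 0)).
Proof.
rewrite /dot -!expr2 paddr_eq0 ?sqr_ge0 // !sqrf_eq0.
by case: a => a1 a2; rewrite xpair_eqE.
Qed.

Lemma dot_vsub_gt0 x p : p <> x -> 0 < dot (vsub x p) (vsub x p).
Proof.
move=> px; rewrite lt0r dot_self_ge0 dot_self_eq0 andbT; apply: contra_notN px.
case: x p => x1 x2 [p1 p2]; rewrite /vsub xpair_eqE /= !subr_eq0.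
by case/andP => /eqP-> /eqP->.
Qed.

(* [e] is a multiple, of modulus at most 1, of the quarter turn of [f], and [w] dotted with that
   quarter turn is [cross w f] up to sign. *)
Lemma normr_dot_le_cross w e f : dot e f = 0 -> dot e e <= dot f f ->
  `|dot w e| <= `|cross w f|.
Proof.
move=> ef ee; rewrite -ler_sqr ?nnegrE // !real_normK ?num_real //.
have [f0|f_gt0] := eqVneq (dot f f) 0.
  have /eqP e0 : dot e e == 0 by rewrite eq_le dot_self_ge0 -f0 ee.
  by move: e0 => /eqP; rewrite dot_self_eq0 => /eqP->; rewrite /dot !mulr0 addr0 expr0n sqr_ge0.
have ff : 0 < dot f f by rewrite lt0r f_gt0 dot_self_ge0.
have id : dot w e * dot f f = cross w f * cross e f.
  have -> : dot w e * dot f f = dot w f * dot e f + cross w f * cross e f.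
    by rewrite /dot /cross; ring.
  by rewrite ef mulr0 add0r.
have ce : cross e f ^+ 2 <= dot f f ^+ 2.
  by have := dot_cross_sqr e f; rewrite ef expr0n add0r => <-; rewrite expr2 ler_pM2r.
rewrite -(ler_pM2r (exprn_gt0 2 ff)) -exprMn id exprMn.
by rewrite ler_wpM2l ?sqr_ge0.
Qed.

Lemma dot_le0_split w a b : w != (0, 0) ->
  dot w a * dot w b <= 0 -> cross w a * cross w b <= 0 -> dot a b <= 0.
Proof.
move=> w0 dab cab; have ww : 0 < dot w w by rewrite lt0r dot_self_eq0 w0 dot_self_ge0.
by rewrite -(pmulr_rle0 _ ww) dot_expand_along; lra.
Qed.

End PlaneVectors.

Section QuarterAngle.
Variable R : realType.
Implicit Types x p y : R * R.

Lemma cos_pi4_sqr : cos (pi / 4) ^+ 2 = 1 / 2 :> R.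
Proof.
have := cos_mulr2n (pi / 4 : R).
have -> : (pi / 4) *+ 2 = pi / 2 :> R by rewrite mulr2n; field.
rewrite cos_pihalf mulr2n; lra.
Qed.

Lemma cos_pi4_gt0 : 0 < cos (pi / 4 : R).
Proof. by apply: cos_gt0_pihalf; have := pi_gt0 R; lra. Qed.

(* [dot <= |cross|] says that cos <= sin for the angle, i.e. that it is at least pi/4. *)
Lemma angle_ge_pi4 x p y : p <> x -> p <> y ->
  dot (vsub x p) (vsub y p) <= `|cross (vsub x p) (vsub y p)| -> pi / 4 <= angle x p y.
Proof.
move=> /dot_vsub_gt0 a_gt0 /dot_vsub_gt0 b_gt0; rewrite /angle.
set a := vsub x p; set b := vsub y p; set d := dot a b => d_le.
set N := vnorm a * vnorm b.
have N_gt0 : 0 < N by apply: mulr_gt0; rewrite sqrtr_gt0.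
have N2 : N ^+ 2 = d ^+ 2 + cross a b ^+ 2.
  by rewrite -dot_cross_sqr /N exprMn /vnorm !sqr_sqrtr ?dot_self_ge0.
have hc := cos_pi4_gt0; have hc2 := cos_pi4_sqr.
have dN_le : d / N <= cos (pi / 4).
  rewrite ler_pdivrMr //; have [d0|d0] := lerP d 0; first by nra.
  have dd : d ^+ 2 <= cross a b ^+ 2.
    by rewrite -[cross a b ^+ 2]real_normK ?num_real //; have := normr_ge0 (cross a b); nra.
  rewrite -ler_sqr ?nnegrE ?(ltW d0) ?(ltW (mulr_gt0 hc N_gt0)) //.
  by rewrite exprMn hc2 N2; lra.
have dN_ge : -1 <= d / N.
  by rewrite ler_pdivlMr // mulN1r; have := sqr_ge0 (cross a b); nra.
have pi_gt0 := pi_gt0 R; have cos_le1 := @cos_le1 R (pi / 4).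
have dN_itv : d / N \in `[-1, 1] by rewrite in_itv /= dN_ge /=; lra.
have acos_itv : acos (d / N) \in `[0, pi].
  by move: dN_itv; rewrite !in_itv /= => dN; rewrite acos_ge0 ?acos_lepi.
have pi4_itv : (pi / 4 : R) \in `[0, pi] by rewrite in_itv /=; apply/andP; split; lra.
by rewrite leNgt -(ltr_cos acos_itv pi4_itv) acosK // -leNgt.
Qed.

End QuarterAngle.

Section InscribedAngle.
Variable R : realType.
Implicit Types a b n m p u v x y : R * R.

Lemma inscribed_angle_ge_pi4 a b p (R2 : R) :
  dot a a = R2 -> dot b b = R2 -> dot p p <= R2 -> dot a b <= 0 ->
  dot (vsub a p) (vsub b p) <= `|cross (vsub a p) (vsub b p)|.
Proof.
move=> aa bb pp ab.
pose e := ((a.1 + b.1) / 2, (a.2 + b.2) / 2); pose f := ((a.1 - b.1) / 2, (a.2 - b.2) / 2).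
pose w := vsub p e.
have ef : dot e f = 0 by rewrite /dot /=; move: aa bb; rewrite /dot => aa bb; lra.
have ee : dot e e <= dot f f by rewrite /dot /=; move: ab; rewrite /dot; lra.
have -> : dot (vsub a p) (vsub b p) = dot w w - dot f f by rewrite /w /e /f /dot /vsub /=; field.
have -> : cross (vsub a p) (vsub b p) = 2 * cross w f by rewrite /w /e /f /cross /vsub /=; field.
have pp' : dot w w - dot f f <= - (2 * dot w e).
  have : dot p p = dot w w + 2 * dot w e + dot e e by rewrite /w /e /f /dot /vsub /=; field.
  have : R2 = dot e e + dot f f by move: aa bb; rewrite /e /f /dot /=; lra.
  lra.
have := normr_dot_le_cross w ef ee; rewrite normrM ger0_norm //.
by have := ler_norm (- dot w e); rewrite normrN; lra.
Qed.

Definition refl u : R * R := (u.1, - u.2).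

(* The point of the edge line [dot n z = rho] at distance [rho] from its foot, on the side of
   the quarter turn [(n.2, - n.1)]; it lies on the circle of radius [sqrt 2 * rho]. *)
Definition corner (rho : R) n : R * R := (rho * (n.1 + n.2), rho * (n.2 - n.1)).

Lemma reflK : involutive refl.
Proof. by case=> u1 u2; rewrite /refl /= opprK. Qed.

Lemma dot_refl u v : dot (refl u) (refl v) = dot u v.
Proof. by rewrite /dot /=; ring. Qed.

Lemma vsub_refl u v : vsub (refl u) (refl v) = refl (vsub u v).
Proof. by rewrite /vsub /refl /=; congr (_, _); ring. Qed.

Lemma dot_corner rho n : dot n n = 1 -> dot (corner rho n) (corner rho n) = 2 * rho ^+ 2.
Proof.
by move=> nn; rewrite -[RHS]mulr1 -[X in _ * X]nn /dot /corner /=; ring.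
Qed.

Lemma edge_point_corner rho n x : 0 < rho -> dot n n = 1 -> dot n x = rho ->
  dot x x <= 2 * rho ^+ 2 ->
  exists2 lam, 0 <= lam & corner rho n = (x.1 + lam * n.2, x.2 - lam * n.1).
Proof.
move=> rho_gt0 nn nx xx; pose s := - cross n x.
have ss : s ^+ 2 <= rho ^+ 2 by have := dot_cross_sqr n x; rewrite nn mul1r nx sqrrN; lra.
have s_le : s <= rho by nra.
exists (rho - s); first by rewrite subr_ge0.
have nn0 : dot n n - 1 = 0 by rewrite nn subrr.
congr (_, _); apply/eqP; rewrite -subr_eq0 /s -nx.
- rewrite [X in X == 0](_ : _ = x.1 * (dot n n - 1)); try by rewrite nn0 mulr0.
  by rewrite /dot /cross; ring.
- rewrite [X in X == 0](_ : _ = x.2 * (dot n n - 1)); try by rewrite nn0 mulr0.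
  by rewrite /dot /cross; ring.
Qed.

Lemma edge_normal2_ge0 rho n x y p : dot n n = 1 -> n.1 <= 0 ->
  dot n x = rho -> dot n p <= rho -> dot n y <= rho ->
  p.1 < x.1 -> p.2 <= x.2 -> y.2 < x.2 -> 0 <= n.2.
Proof.
rewrite /dot => nn n1 nx np ny px1 px2 yx; rewrite leNgt; apply/negP => n2.
have n1_0 : n.1 = 0 by nra.
have n2_N1 : n.2 = -1 by move: nn; rewrite n1_0 mul0r add0r; nra.
by move: nx ny; rewrite n1_0 n2_N1; lra.
Qed.

Lemma corner_ray_flatter rho n x y p : 0 < rho -> dot n n = 1 -> n.1 <= 0 ->
  dot n x = rho -> dot n p <= rho -> dot n y <= rho -> dot x x <= 2 * rho ^+ 2 ->
  p.1 < x.1 -> p.2 <= x.2 -> y.2 < x.2 ->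
  let a := vsub (corner rho n) p in
  [/\ 0 <= n.2, 0 < a.1, 0 <= a.2 & (vsub x p).1 * a.2 <= (vsub x p).2 * a.1].
Proof.
move=> rho_gt0 nn n1 nx np ny xx px1 px2 yx a; rewrite {}/a.
have n2 := edge_normal2_ge0 nn n1 nx np ny px1 px2 yx.
have [lam lam0 ->] := edge_point_corner rho_gt0 nn nx xx.
have nxp : 0 <= n.1 * (x.1 - p.1) + n.2 * (x.2 - p.2) by move: nx np; rewrite /dot; lra.
rewrite /vsub /=; split => //; nra.
Qed.

(* [u.1 * a.2 <= u.2 * a.1] says that the ray [a] is flatter than [u]: the angle between [u]
   and the reflection of [v] is at least the one between [a] and the reflection of [b]. *)
Lemma quadrant_angle_ge_pi4 a b u v :
  0 < a.1 -> 0 < b.1 -> 0 <= a.2 -> 0 <= b.2 ->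
  0 <= u.1 -> 0 <= u.2 -> 0 <= v.1 -> 0 <= v.2 ->
  u.1 * a.2 <= u.2 * a.1 -> v.1 * b.2 <= v.2 * b.1 ->
  dot a (refl b) <= `|cross a (refl b)| -> dot u (refl v) <= `|cross u (refl v)|.
Proof.
rewrite /dot /cross /refl /= => a1 b1 a2 b2 u1 u2 v1 v2 ua vb.
rewrite !ler0_norm; [|nra|nra] => ab.
have ab' : 2 * (a.1 * b.1) <= (a.1 + a.2) * (b.1 + b.2) by nra.
have ua' : u.1 * (a.1 + a.2) <= (u.1 + u.2) * a.1 by nra.
have vb' : v.1 * (b.1 + b.2) <= (v.1 + v.2) * b.1 by nra.
have ab_gt0 : 0 < a.1 * b.1 by exact: mulr_gt0.
have : u.1 * v.1 * (2 * (a.1 * b.1)) <= (u.1 + u.2) * (v.1 + v.2) * (a.1 * b.1).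
  apply: le_trans (_ : u.1 * v.1 * ((a.1 + a.2) * (b.1 + b.2)) <= _).
    by rewrite ler_wpM2l ?mulr_ge0.
  rewrite mulrACA [X in _ <= X]mulrACA.
  by apply: ler_pM; rewrite ?mulr_ge0 ?addr_ge0 //; lra.
rewrite mulrCA mulrA ler_pM2r //; nra.
Qed.

Lemma axis_angle_ge_pi4 rho n m x y p : 0 < rho -> dot n n = 1 -> dot m m = 1 ->
  n.1 <= 0 -> m.1 <= 0 -> dot n x = rho -> dot m y = rho ->
  dot n p <= rho -> dot m p <= rho -> dot n y <= rho -> dot m x <= rho ->
  dot x x <= 2 * rho ^+ 2 -> dot y y <= 2 * rho ^+ 2 -> dot p p <= 2 * rho ^+ 2 ->
  0 <= (vsub x p).1 -> 0 <= (vsub y p).1 -> 0 <= (vsub x p).2 -> 0 <= (vsub p y).2 ->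
  0 < (vsub x y).2 -> dot (vsub x p) (vsub y p) <= `|cross (vsub x p) (vsub y p)|.
Proof.
move=> rho_gt0 nn mm n1 m1 nx my np mp ny mx xx yy pp.
move=> hx1 hy1 hx2 hy2 hyx.
have px1 : p.1 <= x.1 by rewrite -subr_ge0.
have py1 : p.1 <= y.1 by rewrite -subr_ge0.
have px2 : p.2 <= x.2 by rewrite -subr_ge0.
have py2 : y.2 <= p.2 by rewrite -subr_ge0.
have yx : y.2 < x.2 by rewrite -subr_gt0.
(* With [x] or [y] vertically above or below [p], the angle is at least a right angle. *)
have [px1'|px1'] := eqVneq x.1 p.1.
  by apply: le_trans (normr_ge0 _); rewrite /dot /vsub px1' /=; nra.
have [py1'|py1'] := eqVneq y.1 p.1.
  by apply: le_trans (normr_ge0 _); rewrite /dot /vsub py1' /=; nra.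
rewrite eq_sym in px1'; rewrite eq_sym in py1'.
have {px1'}px1 : p.1 < x.1 by rewrite lt_neqAle px1' px1.
have {py1'}py1 : p.1 < y.1 by rewrite lt_neqAle py1' py1.
have [n2 a1 a2 flat_a] := corner_ray_flatter rho_gt0 nn n1 nx np ny xx px1 px2 yx.
have [m2 b1 b2 flat_b] : let b := vsub (corner rho (refl m)) (refl p) in
    [/\ 0 <= (refl m).2, 0 < b.1, 0 <= b.2 &
         (vsub (refl y) (refl p)).1 * b.2 <= (vsub (refl y) (refl p)).2 * b.1].
  by apply: (@corner_ray_flatter _ _ _ (refl x)); rewrite ?dot_refl //= ?lerN2 ?ltrN2.
rewrite -(reflK (vsub y p)) -vsub_refl.
apply: (quadrant_angle_ge_pi4 a1 b1 a2 b2 _ _ _ _ flat_a flat_b); [rewrite /vsub /=; lra.. |].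
rewrite -vsub_refl reflK.
apply: (inscribed_angle_ge_pi4 _ _ pp).
- exact: dot_corner.
- by rewrite dot_refl dot_corner // dot_refl.
- have -> : dot (corner rho n) (refl (corner rho (refl m))) =
      2 * rho ^+ 2 * (n.2 * m.1 - n.1 * m.2).
    by rewrite /dot /corner /refl /=; ring.
  by rewrite pmulr_rle0 ?mulr_gt0 ?exprn_gt0 //; move: m2 => /= m2; nra.
Qed.

End InscribedAngle.

Section Frame.
Variable R : realType.
Variable u : R * R.
Hypothesis u_neq0 : u != (0, 0).
Implicit Types a b n m o p x y z : R * R.

Let L := vnorm u.

Let L_gt0 : 0 < L.
Proof. by rewrite sqrtr_gt0 lt0r dot_self_eq0 u_neq0 dot_self_ge0. Qed.

Definition frame z : R * R := (dot u z / L, cross u z / L).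

Let LL : L ^+ 2 = dot u u.
Proof. by rewrite sqr_sqrtr ?dot_self_ge0. Qed.

Lemma dot_frame a b : dot (frame a) (frame b) = dot a b.
Proof.
have -> : dot (frame a) (frame b) = (dot u a * dot u b + cross u a * cross u b) / L ^+ 2.
  by rewrite {1}/dot /frame /=; field; rewrite (gt_eqF L_gt0).
by rewrite -dot_expand_along LL mulrC mulKf ?dot_self_eq0.
Qed.

Lemma cross_frame a b : cross (frame a) (frame b) = cross a b.
Proof.
have -> : cross (frame a) (frame b) = (dot u a * cross u b - cross u a * dot u b) / L ^+ 2.
  by rewrite {1}/cross /frame /=; field; rewrite (gt_eqF L_gt0).
rewrite LL (_ : _ - _ = cross a b * dot u u) ?mulfK ?dot_self_eq0 //.
by rewrite /dot /cross; ring.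
Qed.

Lemma frame_vsub o a b : vsub (frame (vsub a o)) (frame (vsub b o)) = frame (vsub a b).
Proof. by rewrite /frame /vsub /dot /cross /=; congr (_, _); field; rewrite (gt_eqF L_gt0). Qed.

Lemma frame1_ge0 z : (0 <= (frame z).1) = (0 <= dot u z).
Proof. by rewrite pmulr_lge0 // invr_gt0 L_gt0. Qed.

Lemma frame1_le0 z : ((frame z).1 <= 0) = (dot u z <= 0).
Proof. by rewrite pmulr_lle0 // invr_gt0 L_gt0. Qed.

Lemma frame2_ge0 z : (0 <= (frame z).2) = (0 <= cross u z).
Proof. by rewrite pmulr_lge0 // invr_gt0 L_gt0. Qed.

Lemma frame2_gt0 z : (0 < (frame z).2) = (0 < cross u z).
Proof. by rewrite pmulr_lgt0 // invr_gt0 L_gt0. Qed.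

Lemma frame_angle_ge_pi4 rho o n m x y p : 0 < rho -> dot n n = 1 -> dot m m = 1 ->
  dot u n <= 0 -> dot u m <= 0 -> dot n (vsub x o) = rho -> dot m (vsub y o) = rho ->
  dot n (vsub p o) <= rho -> dot m (vsub p o) <= rho ->
  dot n (vsub y o) <= rho -> dot m (vsub x o) <= rho ->
  dot (vsub x o) (vsub x o) <= 2 * rho ^+ 2 -> dot (vsub y o) (vsub y o) <= 2 * rho ^+ 2 ->
  dot (vsub p o) (vsub p o) <= 2 * rho ^+ 2 ->
  0 <= dot u (vsub x p) -> 0 <= dot u (vsub y p) -> 0 <= cross u (vsub x p) ->
  0 <= cross u (vsub p y) -> 0 < cross u (vsub x y) ->
  dot (vsub x p) (vsub y p) <= `|cross (vsub x p) (vsub y p)|.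
Proof.
have := axis_angle_ge_pi4 (rho := rho) (n := frame n) (m := frame m) (x := frame (vsub x o))
  (y := frame (vsub y o)) (p := frame (vsub p o)).
rewrite !frame_vsub !dot_frame cross_frame !frame1_le0 !frame1_ge0 !frame2_ge0 frame2_gt0.
exact: id.
Qed.

End Frame.

Lemma sign_change (R : realType) (G : nat -> R) (n : nat) : (0 < n)%N -> G n = G 0%N ->
  \sum_(i < n) G i = 0 -> exists2 j, (j < n)%N & 0 <= G j /\ G j.+1 <= 0.
Proof.
move=> n_gt0 Gn G_sum; apply: contrapT => no_change.
have step j : (j < n)%N -> 0 <= G j -> 0 < G j.+1.
  by move=> jn Gj; rewrite ltNge; apply/negP => Gj1; apply: no_change; exists j.
have forward i d : (i + d <= n)%N -> 0 <= G i -> 0 <= G (i + d)%N.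
  move=> + Gi; elim: d => [|d IH] idn; first by rewrite addn0.
  by rewrite addnS ltW // step ?IH // ?(leq_trans _ idn) // addnS.
case: n n_gt0 Gn G_sum {no_change} step forward => // n _ Gn.
rewrite big_ord_recl => G_sum step forward.
have [[i i_n Gi]|all_neg] := pselect (exists2 i, (i < n.+1)%N & 0 <= G i).
  have G0 : 0 < G 0%N.
    rewrite -Gn; apply: step => //.
    by have := forward i (n - i)%N; rewrite subnKC -1?ltnS // => /(_ (leqnSn n) Gi).
  have : 0 <= \sum_(i < n) G (lift ord0 i).
    by apply: sumr_ge0 => j _; exact: (forward 0%N j.+1 (leqW (ltn_ord j)) (ltW G0)).
  lra.
have neg i : (i < n.+1)%N -> G i < 0.
  by move=> i_n; rewrite ltNge; apply/negP => Gi; apply: all_neg; exists i.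
have : \sum_(i < n) G (lift ord0 i) <= 0 by apply: sumr_le0 => j _; rewrite ltW ?neg.
by have := neg 0%N erefl; lra.
Qed.

Lemma convex_comb_sqr_le (R : realType) (n : nat) (l a : 'I_n -> R) :
  (forall i, 0 <= l i) -> \sum_(i < n) l i = 1 ->
  (\sum_(i < n) l i * a i) ^+ 2 <= \sum_(i < n) l i * a i ^+ 2.
Proof.
move=> l0 l1.
have spread m : \sum_(i < n) l i * (a i - m) ^+ 2 =
    \sum_(i < n) l i * a i ^+ 2 - 2 * m * (\sum_(i < n) l i * a i) + m ^+ 2 * \sum_(i < n) l i.
  by rewrite !mulr_sumr -sumrB -big_split /=; apply: eq_bigr => i _; ring.
have := spread (\sum_(i < n) l i * a i); rewrite l1.
have : 0 <= \sum_(i < n) l i * (a i - \sum_(j < n) l j * a j) ^+ 2.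
  by apply: sumr_ge0 => i _; rewrite mulr_ge0 ?sqr_ge0.
lra.
Qed.

Section HalfplaneTopology.
Variable R : realType.
Implicit Types c n z w : R * R.

Lemma nbhs_box z (A : set (R * R)) : nbhs z A <-> exists2 e : R, 0 < e &
  forall w, `|z.1 - w.1| < e -> `|z.2 - w.2| < e -> A w.
Proof.
split=> [/nbhs_ballP [e e0 zeA]|[e e0 zeA]].
  by exists e => // w z1 z2; apply: zeA.
by apply/nbhs_ballP; exists e => // w [z1 z2]; apply: zeA.
Qed.

Lemma unit_coord_le1 n : dot n n = 1 -> `|n.1| <= 1 /\ `|n.2| <= 1.
Proof.
have le1 (x y : R) : x * x + y * y = 1 -> `|x| <= 1.
  by move=> xy; rewrite -(@expr_le1 _ 2) ?normr_ge0 // real_normK ?num_real //; nra.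
by rewrite /dot => nn; split; [apply: (le1 _ n.2) | apply: (le1 _ n.1)]; lra.
Qed.

Lemma halfplane_nbhs n c z (g : R) : dot n n = 1 -> dot n (vsub z c) < g ->
  nbhs z [set w | dot n (vsub w c) < g].
Proof.
move=> nn nz; apply/nbhs_box; have [n1 n2] := unit_coord_le1 nn.
exists ((g - dot n (vsub z c)) / 2) => [|w zw1 zw2 /=]; first by rewrite divr_gt0 // subr_gt0.
have : dot n (vsub w c) - dot n (vsub z c) <= `|w.1 - z.1| + `|w.2 - z.2|.
  have -> : dot n (vsub w c) - dot n (vsub z c) = n.1 * (w.1 - z.1) + n.2 * (w.2 - z.2).
    by rewrite /dot /vsub /=; ring.
  apply: le_trans (ler_norm _) _; apply: le_trans (ler_normD _ _) _.
  by rewrite !normrM; apply: lerD; rewrite -[X in _ <= X]mul1r ler_wpM2r.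
by rewrite distrC in zw1; rewrite distrC in zw2; lra.
Qed.

End HalfplaneTopology.

Section CosineBounds.
Variable R : realType.

Lemma cos_le_cos_pi (a b : R) : 0 <= a -> a <= b -> b <= pi -> cos b <= cos a.
Proof.
move=> a0 ab bpi; have ha : a \in `[0, pi] by rewrite in_itv /=; apply/andP; split; lra.
have hb : b \in `[0, pi] by rewrite in_itv /=; apply/andP; split; lra.
by rewrite leNgt (ltr_cos hb ha) -leNgt.
Qed.

Lemma cos_le_cos_2pi (q a : R) : 0 <= q <= pi -> q <= a <= 2 * pi - q -> cos a <= cos q.
Proof.
move=> /andP [q0 qpi] /andP [qa aq]; have [api|api] := lerP a pi; first exact: cos_le_cos_pi.
have -> : cos a = cos (2 * pi - a) by rewrite -cosN -(cosD2pi (- a)) mulr2n; congr cos; ring.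
by apply: cos_le_cos_pi => //; lra.
Qed.

End CosineBounds.

Section RegularPolygon.
Variable R : realType.
Variables (k : nat) (r th : R).
Hypothesis k_ge4 : (4 <= k)%N.
Hypothesis r_gt0 : 0 < r.
Implicit Types c q z : R * R.

Local Notation kR := (k%:R : R).

Definition vertex_angle (j : nat) : R := th + 2 * pi * j%:R / kR.

Definition vertex (j : nat) : R * R := (r * cos (vertex_angle j), r * sin (vertex_angle j)).

(* The outer normal of the edge from [vertex j] to [vertex j.+1]. *)
Definition edge_normal (j : nat) : R * R :=
  (cos (th + (2 * j%:R + 1) * pi / kR), sin (th + (2 * j%:R + 1) * pi / kR)).

Definition apothem : R := r * cos (pi / kR).

Definition halfplanes c := [set z | forall j : 'I_k, dot (edge_normal j) (vsub z c) <= apothem].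

Definition open_halfplanes c := [set z | forall j : 'I_k, dot (edge_normal j) (vsub z c) < apothem].

Lemma kR_gt0 : 0 < kR.
Proof. by rewrite ltr0n (leq_trans _ k_ge4). Qed.

Lemma pik_gt0 : 0 < pi / kR.
Proof. by rewrite divr_gt0 ?pi_gt0 ?kR_gt0. Qed.

Lemma pik_le_pi4 : pi / kR <= pi / 4.
Proof. by rewrite ler_pM2l ?pi_gt0 // lef_pV2 ?posrE ?kR_gt0 // (ler_nat R 4 k). Qed.

Lemma cos_pi4_le_cos_pik : cos (pi / 4) <= cos (pi / kR).
Proof. by apply: cos_le_cos_pi; rewrite ?(ltW pik_gt0) ?pik_le_pi4 //; have := pi_gt0 R; lra. Qed.

Lemma apothem_gt0 : 0 < apothem.
Proof. by rewrite mulr_gt0 // (lt_le_trans (cos_pi4_gt0 R) cos_pi4_le_cos_pik). Qed.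

(* This is where [4 <= k] is used: the circumradius is at most [sqrt 2] apothems. *)
Lemma sqr_circumradius_le : r ^+ 2 <= 2 * apothem ^+ 2.
Proof.
have c4 := cos_pi4_le_cos_pik; have c4_gt0 := cos_pi4_gt0 R.
have : cos (pi / 4) ^+ 2 <= cos (pi / kR) ^+ 2 by rewrite ler_sqr ?nnegrE //; lra.
by rewrite /apothem cos_pi4_sqr exprMn; nra.
Qed.

Lemma vertex_angleS j : vertex_angle j.+1 = vertex_angle j + 2 * pi / kR.
Proof. by rewrite /vertex_angle -natr1; field; rewrite gt_eqF ?kR_gt0. Qed.

Lemma vertex_angle_k : vertex_angle k = vertex_angle 0 + pi *+ 2.
Proof. by rewrite /vertex_angle mulr2n mulr0 mul0r addr0; field; rewrite gt_eqF ?kR_gt0. Qed.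

Lemma vertex_k : vertex k = vertex 0.
Proof. by rewrite /vertex vertex_angle_k cosD2pi sinD2pi. Qed.

Lemma dot_edge_normal_vertex i j :
  dot (edge_normal j) (vertex i) = r * cos ((2 * (i%:R - j%:R) - 1) * pi / kR).
Proof.
have -> : (2 * (i%:R - j%:R) - 1) * pi / kR = vertex_angle i - (th + (2 * j%:R + 1) * pi / kR).
  by rewrite /vertex_angle; field; rewrite gt_eqF ?kR_gt0.
by rewrite cosB /dot /edge_normal /vertex /=; ring.
Qed.

Lemma cos_le_cos_pik (m : R) : 1 <= m <= 2 * kR - 1 -> cos (m * pi / kR) <= cos (pi / kR).
Proof.
move=> /andP [m1 m2]; have q0 := pik_gt0; have k0 := kR_gt0.
have q_le : pi / kR <= pi by have := pik_le_pi4; have := pi_gt0 R; lra.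
apply: cos_le_cos_2pi; rewrite ?(ltW q0) ?q_le //= -mulrA.
have -> : 2 * pi - pi / kR = (2 * kR - 1) * (pi / kR) by field; rewrite gt_eqF.
by apply/andP; split; nra.
Qed.

Lemma dot_edge_normal_vertex_le (i j : nat) : (i < k)%N -> (j < k)%N ->
  dot (edge_normal j) (vertex i) <= apothem.
Proof.
move=> ik jk; rewrite dot_edge_normal_vertex /apothem ler_pM2l //.
have k0 := kR_gt0; have [ji|ij] := ltnP j i.
  have d1 : 1 <= (i - j)%:R :> R by rewrite ler1n subn_gt0.
  have d2 : (i - j)%:R <= kR by rewrite ler_nat (leq_trans (leq_subr _ _) (ltnW ik)).
  by rewrite -natrB ?(ltnW ji) //; apply: cos_le_cos_pik; apply/andP; split; lra.
have d2 : (j - i)%:R <= kR - 1 :> R.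
  by rewrite lerBrDr natr1 ler_nat (leq_ltn_trans (leq_subr i j) jk).
have -> : (2 * (i%:R - j%:R) - 1) * pi / kR = - ((2 * (j - i)%:R + 1) * pi / kR) :> R.
  by rewrite natrB //; ring.
by rewrite cosN; apply: cos_le_cos_pik; apply/andP; split; have := ler0n R (j - i); lra.
Qed.

Lemma dot_edge_normal_vertex_eq (j : nat) :
  dot (edge_normal j) (vertex j) = apothem /\ dot (edge_normal j) (vertex j.+1) = apothem.
Proof.
rewrite !dot_edge_normal_vertex /apothem; split; congr (_ * _).
  by rewrite -cosN; congr cos; rewrite subrr; ring.
by congr cos; rewrite -natr1; ring.
Qed.

Lemma telescope_vertex_angle (g : R -> R) : periodic g (pi *+ 2) ->
  \sum_(i < k) (g (vertex_angle i.+1 - pi / kR) - g (vertex_angle i - pi / kR)) = 0.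
Proof.
move=> g_per.
rewrite -(big_mkord xpredT
  (fun i => g (vertex_angle i.+1 - pi / kR) - g (vertex_angle i - pi / kR))).
rewrite telescope_sumr // vertex_angle_k.
by rewrite -addrAC g_per subrr.
Qed.

Lemma vertex_angleS_pik j : vertex_angle j.+1 - pi / kR = vertex_angle j + pi / kR.
Proof. by rewrite vertex_angleS; field; rewrite gt_eqF ?kR_gt0. Qed.

Lemma sin_pik_gt0 : 0 < sin (pi / kR).
Proof.
by apply: sin_gt0_pi; rewrite pik_gt0 /=; have := pik_le_pi4; have := pi_gt0 R; lra.
Qed.

Lemma sum_cos_vertex_angle : \sum_(i < k) cos (vertex_angle i) = 0.
Proof.
have s2 : sin (pi / kR) *+ 2 != 0 by rewrite mulrn_eq0 (gt_eqF sin_pik_gt0).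
apply: (mulfI s2).
rewrite mulr0 big_distrr -[RHS](telescope_vertex_angle (@sinD2pi R)) /=.
by apply: eq_bigr => i _; rewrite vertex_angleS_pik sinB sinD mulr2n; ring.
Qed.

Lemma sum_sin_vertex_angle : \sum_(i < k) sin (vertex_angle i) = 0.
Proof.
have s2 : sin (pi / kR) *+ 2 != 0 by rewrite mulrn_eq0 (gt_eqF sin_pik_gt0).
apply: (mulfI s2); rewrite mulr0 big_distrr.
rewrite -[RHS](telescope_vertex_angle (g := fun x => - cos x)) => [|x]; last by rewrite /= cosD2pi.
by apply: eq_bigr => i _; rewrite /= vertex_angleS_pik cosB cosD mulr2n; ring.
Qed.

Lemma convex_comb_shift (l a : 'I_k -> R) (c0 : R) : \sum_(j < k) l j = 1 ->
  \sum_(j < k) l j * (c0 + a j) = c0 + \sum_(j < k) l j * a j.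
Proof. by move=> l1; under eq_bigr do rewrite mulrDr; rewrite big_split -mulr_suml l1 mul1r. Qed.

Lemma regular_polygonP c z : regular_polygon k c r th z <-> exists l : 'I_k -> R,
  [/\ forall j, 0 <= l j, \sum_(j < k) l j = 1 &
      vsub z c = (\sum_(j < k) l j * (vertex j).1, \sum_(j < k) l j * (vertex j).2)].
Proof.
split=> [[l [l0 [l1 ->]]]|[l [l0 l1 zc]]]; exists l.
  by split=> //; rewrite /vsub /= !convex_comb_shift //; congr (_, _); ring.
split=> //; split=> //; rewrite !convex_comb_shift //.
have [<- <-] : (vsub z c).1 = \sum_(j < k) l j * (vertex j).1 /\
  (vsub z c).2 = \sum_(j < k) l j * (vertex j).2 by rewrite zc.
by case: z {zc} => z1 z2; rewrite /vsub /=; congr (_, _); ring.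
Qed.

Lemma polygon_sub_halfplanes c : regular_polygon k c r th `<=` halfplanes c.
Proof.
move=> z /regular_polygonP [l [l0 l1 zc]] i; rewrite /= zc.
have -> : dot (edge_normal i) (\sum_(j < k) l j * (vertex j).1, \sum_(j < k) l j * (vertex j).2)
    = \sum_(j < k) l j * dot (edge_normal i) (vertex j).
  by rewrite /dot /= !mulr_sumr -big_split; apply: eq_bigr => j _ /=; ring.
apply: le_trans (_ : \sum_(j < k) l j * apothem <= _); last by rewrite -mulr_suml l1 mul1r.
by apply: ler_sum => j _; rewrite ler_wpM2l ?dot_edge_normal_vertex_le.
Qed.

Lemma sum_vertex : \sum_(i < k) (vertex i).1 = 0 /\ \sum_(i < k) (vertex i).2 = 0.
Proof. by rewrite /vertex /= -!mulr_sumr sum_cos_vertex_angle sum_sin_vertex_angle mulr0. Qed.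

Lemma cross_vertexS_gt0 j : 0 < cross (vertex j) (vertex j.+1).
Proof.
have -> : cross (vertex j) (vertex j.+1) = r ^+ 2 * sin (vertex_angle j.+1 - vertex_angle j).
  by rewrite sinB /cross /vertex /=; ring.
rewrite vertex_angleS addrAC subrr add0r -mulrA mulr_gt0 ?exprn_gt0 // sin_gt0_pi //.
by have := pik_gt0; have := pik_le_pi4; have := pi_gt0 R; lra.
Qed.

Lemma vertex_cone q : exists2 j, (j < k)%N & 0 <= cross (vertex j) q /\ cross (vertex j.+1) q <= 0.
Proof.
apply: sign_change; first exact: leq_trans k_ge4; first by rewrite vertex_k.
rewrite /cross (eq_bigr (fun i : 'I_k => q.2 * (vertex i).1 - q.1 * (vertex i).2)).
  by rewrite sumrB -!mulr_sumr sum_cos_vertex_angle sum_sin_vertex_angle !mulr0 subrr.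
by move=> i _; ring.
Qed.

Lemma regular_polygon_cone c z (j : 'I_k) (al be : R) : 0 <= al -> 0 <= be -> al + be <= 1 ->
  vsub z c = (al * (vertex j).1 + be * (vertex j.+1).1, al * (vertex j).2 + be * (vertex j.+1).2) ->
  regular_polygon k c r th z.
Proof.
move=> al0 be0 ab1 zc; apply/regular_polygonP.
have k_gt0 : (0 < k)%N by exact: leq_trans k_ge4.
pose j' : 'I_k := Ordinal (ltn_pmod j.+1 k_gt0).
have vj' : vertex j' = vertex j.+1.
  rewrite /=; have := ltn_ord j; rewrite leq_eqVlt => /orP [/eqP ->|jk].
    by rewrite modnn vertex_k.
  by rewrite modn_small.
(* The slack [1 - al - be] is spread evenly: the vertices average to the centre. *)
pose l i := (if i == j then al else 0) + (if i == j' then be else 0) + (1 - al - be) / kR.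
have pick (i0 : 'I_k) x (f : 'I_k -> R) : \sum_(i < k) (if i == i0 then x else 0) * f i = x * f i0.
  by rewrite (bigD1 i0) //= eqxx big1 ?addr0 // => i /negbTE ->; rewrite mul0r.
have suml f : \sum_(i < k) l i * f i = al * f j + be * f j' + (1 - al - be) / kR * \sum_(i < k) f i.
  by rewrite /l; under eq_bigr do rewrite 2!mulrDl; rewrite !big_split /= !pick -mulr_sumr.
have [s1 s2] := sum_vertex.
exists l; split.
- have slack : 0 <= (1 - al - be) / kR by apply: divr_ge0; [lra | exact: ltW kR_gt0].
  by move=> i; rewrite /l; case: (i == j); case: (i == j'); lra.
- transitivity (\sum_(i < k) l i * 1); first by apply: eq_bigr => i _; rewrite mulr1.
  rewrite suml sumr_const card_ord mulfVK ?gt_eqF ?kR_gt0 //; ring.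
- by rewrite !suml s1 s2 !mulr0 !addr0 vj'.
Qed.

Lemma halfplanes_sub_polygon c : halfplanes c `<=` regular_polygon k c r th.
Proof.
move=> z hz; pose q := vsub z c.
have [j jk [cj cj1]] := vertex_cone q.
have D_gt0 := cross_vertexS_gt0 j; set D := cross _ _ in D_gt0.
pose al := cross q (vertex j.+1) / D; pose be := cross (vertex j) q / D.
have al0 : 0 <= al by rewrite divr_ge0 ?(ltW D_gt0) // /cross; move: cj1; rewrite /cross; lra.
have be0 : 0 <= be by rewrite divr_ge0 ?(ltW D_gt0).
have qe : q = (al * (vertex j).1 + be * (vertex j.+1).1, al * (vertex j).2 + be * (vertex j.+1).2).
  by rewrite /al /be /D /cross [q in LHS]surjective_pairing; congr (_, _); field; rewrite gt_eqF.
apply: (regular_polygon_cone (j := Ordinal jk) al0 be0 _ qe).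
have [nj nj1] := dot_edge_normal_vertex_eq j.
have := hz (Ordinal jk); rewrite -/q [q in dot _ q]qe /=.
have -> : dot (edge_normal j) (al * (vertex j).1 + be * (vertex j.+1).1,
    al * (vertex j).2 + be * (vertex j.+1).2) = (al + be) * apothem.
  by rewrite mulrDl -[X in _ = al * X + _]nj -[X in _ = _ + be * X]nj1 /dot /=; ring.
by rewrite -ler_pdivlMr ?apothem_gt0 // divff // gt_eqF ?apothem_gt0.
Qed.

Lemma polygon_halfplanes c : regular_polygon k c r th = halfplanes c.
Proof. by apply/seteqP; split; [exact: polygon_sub_halfplanes | exact: halfplanes_sub_polygon]. Qed.

Lemma edge_normal_unit j : dot (edge_normal j) (edge_normal j) = 1.
Proof. by rewrite /dot -!expr2 cos2Dsin2. Qed.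

Lemma open_halfplanes_nbhs c z : open_halfplanes c z -> nbhs z (open_halfplanes c).
Proof.
move=> zS; have := @filter_forall (R * R) 'I_k
  (fun j w => dot (edge_normal j) (vsub w c) < apothem) (nbhs z) _
  (fun j => halfplane_nbhs (edge_normal_unit j) (zS j)).
exact.
Qed.

Lemma interior_polygon c : interior (regular_polygon k c r th) = open_halfplanes c.
Proof.
rewrite polygon_halfplanes; apply/seteqP; split; last first.
  by move=> z /open_halfplanes_nbhs; apply: filterS => w wS j; apply: ltW.
move=> z /nbhs_box [e e_gt0 zeH] j; rewrite ltNge; apply/negP => zj.
(* Pushing [z] outwards along the edge normal leaves the half-plane. *)
pose n := edge_normal j; pose w := (z.1 + e / 2 * n.1, z.2 + e / 2 * n.2).
have [n1 n2] := unit_coord_le1 (edge_normal_unit j).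
have e2 : 0 < e / 2 by rewrite divr_gt0.
have near (x : R) : `|x| <= 1 -> `|e / 2 * x| < e.
  by move=> x1; rewrite normrM gtr0_norm //; apply: le_lt_trans (ler_wpM2l (ltW e2) x1) _; lra.
have /(_ j) : halfplanes c w by apply: zeH; rewrite /w /= opprD !addNKr !normrN !near.
have -> : dot n (vsub w c) = dot n (vsub z c) + e / 2 * dot n n by rewrite /dot /vsub /w /=; ring.
by rewrite edge_normal_unit mulr1; lra.
Qed.

Lemma closure_polygon c : closure (regular_polygon k c r th) = halfplanes c.
Proof.
apply/seteqP; split; last by rewrite -polygon_halfplanes; exact: subset_closure.
move=> z zK j; rewrite leNgt; apply/negP => zj.
pose n := edge_normal j.
have nn : dot (- n) (- n) = 1 by rewrite /dot /= !mulrNN; exact: edge_normal_unit.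
have opp w : dot (- n) (vsub w c) = - dot n (vsub w c) by rewrite /dot /=; ring.
have : nbhs z [set w | dot (- n) (vsub w c) < - apothem].
  by apply: halfplane_nbhs; rewrite // opp ltrN2.
move=> /zK [w [/polygon_sub_halfplanes /(_ j) wH]] /=; rewrite opp ltrN2; lra.
Qed.

Lemma polygon_disk c z : regular_polygon k c r th z -> dot (vsub z c) (vsub z c) <= r ^+ 2.
Proof.
move=> /regular_polygonP [l [l0 l1 ->]]; rewrite /dot /= -!expr2.
apply: le_trans (lerD (convex_comb_sqr_le _ l0 l1) (convex_comb_sqr_le _ l0 l1)) _.
rewrite -big_split /= (eq_bigr (fun i => l i * r ^+ 2)) ?l1 ?mul1r -?mulr_suml ?l1 ?mul1r //.
by move=> i _; rewrite -mulrDr /vertex /= !exprMn -mulrDr cos2Dsin2 mulr1.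
Qed.

Lemma halfplanes_disk c z : halfplanes c z -> dot (vsub z c) (vsub z c) <= 2 * apothem ^+ 2.
Proof.
by rewrite -polygon_halfplanes => /polygon_disk zr; apply: le_trans zr sqr_circumradius_le.
Qed.

Lemma translate_polygon c t :
  translate t (regular_polygon k c r th) = regular_polygon k (c.1 + t.1, c.2 + t.2) r th.
Proof.
have shift z : vsub (z.1 + t.1, z.2 + t.2) (c.1 + t.1, c.2 + t.2) = vsub z c.
  by rewrite /vsub /=; congr (_, _); ring.
rewrite !polygon_halfplanes; apply/seteqP; split => [_ [w wH ->] j|z zH].
  by rewrite shift; exact: wH.
exists (z.1 - t.1, z.2 - t.2); last by rewrite /= !subrK -surjective_pairing.
by move=> j; rewrite -shift /= !subrK; exact: zH.
Qed.

End RegularPolygon.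

Section TranslatedPolygons.
Variable R : realType.
Variables (k : nat) (r th : R).
Hypothesis k_ge4 : (4 <= k)%N.
Hypothesis r_gt0 : 0 < r.
Variables (c t : R * R).
Hypothesis t_neq0 : t != (0, 0).
Implicit Types a b o p q w x z : R * R.

Local Notation H := (halfplanes k r th).
Local Notation S := (open_halfplanes k r th).
Local Notation rho := (apothem k r).

Definition lerp a b (s : R) : R * R := (a.1 + s * (b.1 - a.1), a.2 + s * (b.2 - a.2)).

Definition along q (u : R) : R * R := (q.1 + u * t.1, q.2 + u * t.2).

Local Notation c' := (c.1 + t.1, c.2 + t.2).

Definition common_boundary z := [/\ H c z, ~ S c z, H c' z & ~ S c' z].

Lemma dot_lerp n a b o s :
  dot n (vsub (lerp a b s) o) = (1 - s) * dot n (vsub a o) + s * dot n (vsub b o).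
Proof. by rewrite /dot /vsub /lerp /=; ring. Qed.

Lemma halfplanes_lerp o a b s : H o a -> H o b -> 0 <= s <= 1 -> H o (lerp a b s).
Proof.
move=> ha hb /andP [s0 s1] j; rewrite dot_lerp.
have := ha j; have := hb j; set x := dot _ (vsub a o); set y := dot _ (vsub b o) => hy hx.
by nra.
Qed.

Lemma open_halfplanes_lerp o a b s : H o a -> S o b -> 0 < s <= 1 -> S o (lerp a b s).
Proof.
move=> ha hb /andP [s0 s1] j; rewrite dot_lerp.
have := ha j; have := hb j; set x := dot _ (vsub a o); set y := dot _ (vsub b o) => hy hx.
by nra.
Qed.

Lemma open_halfplanes_along o q (a b m : R) : H o (along q a) -> S o (along q b) ->
  (a < m <= b) \/ (b <= m < a) -> S o (along q m).
Proof.
move=> ha hb hm; have ab : b - a != 0 by case: hm => /andP [? ?]; apply/eqP; lra.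
have -> : along q m = lerp (along q a) (along q b) ((m - a) / (b - a)).
  by rewrite /along /lerp /=; congr (_, _); field.
apply: open_halfplanes_lerp => //; apply/andP.
case: hm => /andP [h1 h2]; first by split; [apply: divr_gt0 | rewrite ler_pdivrMr]; lra.
rewrite -[m - a]opprB -[b - a]opprB invrN mulrNN.
by split; [apply: divr_gt0 | rewrite ler_pdivrMr]; lra.
Qed.

Lemma along0 q : along q 0 = q.
Proof. by rewrite /along !mul0r !addr0 -surjective_pairing. Qed.

Lemma alongD q u v : along (along q u) v = along q (u + v).
Proof. by rewrite /along /=; congr (_, _); ring. Qed.

Lemma vsub_shifted_center z : vsub z c' = vsub (along z (-1)) c.
Proof. by rewrite /vsub /along /=; congr (_, _); ring. Qed.

Lemma halfplanes_shifted z : H c' z <-> H c (along z (-1)).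
Proof. by split=> zH j; have := zH j; rewrite vsub_shifted_center. Qed.

Lemma open_halfplanes_shifted z : S c' z <-> S c (along z (-1)).
Proof. by split=> zS j; have := zS j; rewrite vsub_shifted_center. Qed.

Lemma along_cross q z : cross t z = cross t q -> z = along q (dot t (vsub z q) / dot t t).
Proof.
move=> ztq; have tt_neq0 : t.1 * t.1 + t.2 * t.2 != 0 by move: t_neq0; rewrite -dot_self_eq0.
rewrite [z in LHS]surjective_pairing /along; congr (_, _).
  have -> : z.1 = q.1 + dot t (vsub z q) / dot t t * t.1 - t.2 * (cross t z - cross t q) / dot t t.
    by rewrite /dot /cross /vsub /=; field.
  by rewrite ztq subrr mulr0 mul0r subr0.
have -> : z.2 = q.2 + dot t (vsub z q) / dot t t * t.2 + t.1 * (cross t z - cross t q) / dot t t.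
  by rewrite /dot /cross /vsub /=; field.
by rewrite ztq subrr mulr0 mul0r addr0.
Qed.

(* On a line parallel to [t], the two polygons cut out intervals that are translates of each
   other by one unit; a common boundary point is an endpoint of both. *)
Lemma common_boundary_cross_neq x w : common_boundary x -> S c w -> S c' w ->
  cross t w != cross t x.
Proof.
move=> [x0 nx0 /halfplanes_shifted x1 nx1] w0 w1; apply/eqP => /along_cross wx.
move: w0 w1; rewrite wx; set mu := _ / _ => w0 /open_halfplanes_shifted; rewrite alongD => w1.
have [mu_lt0|mu_gt0|mu0] := ltgtP mu 0.
- apply: nx1; apply/open_halfplanes_shifted.
  by apply: (open_halfplanes_along (a := 0) (b := mu + -1)); rewrite ?along0 //; right; lra.
- apply: nx0; rewrite -(along0 x).
  by apply: (open_halfplanes_along (a := -1) (b := mu)) => //; left; lra.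
- by apply: nx0; move: w0; rewrite mu0 along0.
Qed.

Lemma common_boundary_cross_between x w p : common_boundary x -> S c w -> S c' w ->
  H c p -> H c' p -> ~ (cross t w < cross t x < cross t p \/ cross t p < cross t x < cross t w).
Proof.
move=> xB w0 w1 p0 p1 wxp.
have wp : cross t w - cross t p != 0 by case: wxp => /andP [? ?]; apply/eqP; lra.
pose s := (cross t x - cross t p) / (cross t w - cross t p).
have s_itv : 0 < s <= 1.
  rewrite /s; apply/andP; case: wxp => /andP [h1 h2].
    rewrite -[cross t x - _]opprB -[cross t w - _]opprB invrN mulrNN.
    by split; [apply: divr_gt0 | rewrite ler_pdivrMr]; lra.
  by split; [apply: divr_gt0 | rewrite ler_pdivrMr]; lra.
have := common_boundary_cross_neq xB (open_halfplanes_lerp p0 w0 s_itv)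
  (open_halfplanes_lerp p1 w1 s_itv).
have -> : cross t (lerp p w s) = cross t p + s * (cross t w - cross t p).
  by rewrite /cross /lerp /=; ring.
by rewrite /s divfK // addrC subrK eqxx.
Qed.

Lemma common_boundary_along x mu u : common_boundary x -> common_boundary (along x mu) ->
  0 <= u <= mu -> common_boundary (along x u).
Proof.
move=> xB yB /andP [u0 u_mu]; have [mu0|mu_neq0] := eqVneq mu 0.
  have -> : u = 0 by lra.
  by rewrite along0.
case: xB yB => x0 nx0 x1 nx1 [y0 ny0 y1 ny1].
have xu : along x u = lerp x (along x mu) (u / mu).
  by rewrite /lerp /along /=; congr (_, _); field.
have s_itv : 0 <= u / mu <= 1 by rewrite divr_ge0 ?ler_pdivrMr /=; lra.
split; rewrite ?xu; [exact: halfplanes_lerp | | exact: halfplanes_lerp |].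
- rewrite -xu => xu0; apply: nx0; rewrite -(along0 x).
  have [<-|u_neq0] := eqVneq u 0; first by [].
  move/halfplanes_shifted: x1 => x1.
  by apply: (open_halfplanes_along (a := -1) (b := u)) => //; left; lra.
- rewrite -xu => /open_halfplanes_shifted; rewrite alongD => xu1.
  apply: ny1; apply/open_halfplanes_shifted; rewrite alongD.
  by apply: (open_halfplanes_along (a := mu) (b := u + -1)) => //; right; lra.
Qed.

Lemma continuous_along q : continuous (along q).
Proof.
move=> u; apply: (@cvg_pair _ _ _ (nbhs u) (nbhs (q.1 + u * t.1)) (nbhs (q.2 + u * t.2)));
  by apply: cvgD; [exact: cvg_cst | apply: cvgM; [exact: cvg_id | exact: cvg_cst]].
Qed.

Lemma common_boundary_connected x y : common_boundary x -> common_boundary y ->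
  cross t x = cross t y -> connected_component common_boundary x y.
Proof.
wlog mu0 : x y / 0 <= dot t (vsub y x) / dot t t.
  move=> wlog_mu xB yB xy; have [mu0|mu_lt0] := lerP 0 (dot t (vsub y x) / dot t t).
    exact: wlog_mu.
  apply: connected_component_sym; apply: wlog_mu => //.
  have -> : dot t (vsub x y) = - dot t (vsub y x) by rewrite /dot /vsub /=; ring.
  by rewrite mulNr oppr_ge0 ltW.
move=> xB yB xy; move: (along_cross (esym xy)) yB => ->; set mu := _ / _ in mu0 * => yB.
exists [set along x u | u in `[0, mu]%classic]; first split.
- by exists 0; rewrite ?along0 //= in_itv /= lexx.
- move=> _ [u u_itv <-]; move: u_itv; rewrite /= in_itv /= => u_itv.
  exact: common_boundary_along yB u_itv.
- apply: connected_continuous_connected; first exact: segment_connected.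
  by apply: continuous_subspaceT; exact: continuous_along.
- by exists mu; rewrite //= in_itv /= lexx mu0.
Qed.

Lemma boundary_edge_normal o z : H o z -> ~ S o z ->
  exists j : 'I_k, dot (edge_normal k th j) (vsub z o) = rho.
Proof.
move=> zH /existsNP [j zj]; exists j; apply/eqP; rewrite eq_le zH /=.
by rewrite leNgt; apply/negP.
Qed.

Lemma common_boundary_angle_ahead a b p : common_boundary a -> common_boundary b ->
  H c p -> H c' p -> cross t b <= cross t p -> cross t p <= cross t a -> cross t b < cross t a ->
  0 <= dot t (vsub a p) -> 0 <= dot t (vsub b p) ->
  dot (vsub a p) (vsub b p) <= `|cross (vsub a p) (vsub b p)|.
Proof.
move=> [a0 _ a1 na1] [b0 _ b1 nb1] p0 p1 bp pa ba ua ub.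
have [i ai] := boundary_edge_normal a1 na1; have [j bj] := boundary_edge_normal b1 nb1.
(* Edges of the shifted polygon through points of the original one face against [t]. *)
have shift n z : dot n (vsub z c) = dot n (vsub z c') + dot t n by rewrite /dot /vsub /=; ring.
have ti : dot t (edge_normal k th i) <= 0 by have := a0 i; rewrite shift ai; lra.
have tj : dot t (edge_normal k th j) <= 0 by have := b0 j; rewrite shift bj; lra.
have disk := halfplanes_disk k_ge4 r_gt0.
apply: (frame_angle_ge_pi4 t_neq0 (o := c') _ _ _ ti tj ai bj (p1 i) (p1 j) (b1 i) (a1 j)
  (disk _ _ _ a1) (disk _ _ _ b1) (disk _ _ _ p1) ua ub);
  rewrite ?apothem_gt0 ?edge_normal_unit // ?cross_vsubr; lra.
Qed.

Lemma common_boundary_angle_behind a b p : common_boundary a -> common_boundary b ->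
  H c p -> H c' p -> cross t b <= cross t p -> cross t p <= cross t a -> cross t b < cross t a ->
  dot t (vsub a p) <= 0 -> dot t (vsub b p) <= 0 ->
  dot (vsub a p) (vsub b p) <= `|cross (vsub a p) (vsub b p)|.
Proof.
move=> [a0 na0 a1 _] [b0 nb0 b1 _] p0 p1 bp pa ba ua ub.
have [i ai] := boundary_edge_normal a0 na0; have [j bj] := boundary_edge_normal b0 nb0.
have shift n z : dot n (vsub z c') = dot n (vsub z c) + dot (- t) n by rewrite /dot /vsub /=; ring.
have ti : dot (- t) (edge_normal k th i) <= 0 by have := a1 i; rewrite shift ai; lra.
have tj : dot (- t) (edge_normal k th j) <= 0 by have := b1 j; rewrite shift bj; lra.
have t_neq0' : - t != (0, 0) by rewrite -oppr_eq0 opprK.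
rewrite dotC normr_crossC.
have disk := halfplanes_disk k_ge4 r_gt0.
apply: (frame_angle_ge_pi4 t_neq0' (o := c) _ _ _ tj ti bj ai (p0 j) (p0 i) (a0 j) (b0 i)
  (disk _ _ _ b0) (disk _ _ _ a0) (disk _ _ _ p0));
  rewrite ?apothem_gt0 ?edge_normal_unit // ?dotNl ?crossNl ?cross_vsubr; lra.
Qed.

Lemma common_boundary_angle a b p : common_boundary a -> common_boundary b ->
  H c p -> H c' p -> cross t b <= cross t p <= cross t a -> cross t b < cross t a ->
  dot (vsub a p) (vsub b p) <= `|cross (vsub a p) (vsub b p)|.
Proof.
move=> aB bB p0 p1 /andP [bp pa] ba.
have [ua|ua] := lerP 0 (dot t (vsub a p)); have [ub|ub] := lerP 0 (dot t (vsub b p)).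
- exact: common_boundary_angle_ahead.
- apply: le_trans (normr_ge0 _); apply: (dot_le0_split t_neq0).
    exact: mulr_ge0_le0 ua (ltW ub).
  by rewrite !cross_vsubr; apply: mulr_ge0_le0; lra.
- apply: le_trans (normr_ge0 _); apply: (dot_le0_split t_neq0).
    exact: mulr_le0_ge0 (ltW ua) ub.
  by rewrite !cross_vsubr; apply: mulr_ge0_le0; lra.
- exact: common_boundary_angle_behind aB bB p0 p1 bp pa ba (ltW ua) (ltW ub).
Qed.

Lemma common_boundary_between x y w p : common_boundary x -> common_boundary y ->
  S c w -> S c' w -> H c p -> H c' p -> cross t y < cross t x ->
  cross t y <= cross t p <= cross t x.
Proof.
move=> xB yB w0 w1 p0 p1 yx.
have between := common_boundary_cross_between _ w0 w1.
have [[x0 _ x1 _] [y0 _ y1 _]] := (xB, yB).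
have [w_lt_x|w_gt_x|/eqP] := ltgtP (cross t w) (cross t x); last first.
- by rewrite (negbTE (common_boundary_cross_neq xB w0 w1)).
- by case: (between x y xB y0 y1); right; rewrite yx w_gt_x.
have [w_gt_y|w_lt_y|/eqP] := ltgtP (cross t y) (cross t w); last first.
- by rewrite eq_sym (negbTE (common_boundary_cross_neq yB w0 w1)).
- by case: (between y x yB x0 x1); left; rewrite w_lt_y yx.
apply/andP; split; rewrite leNgt; apply/negP => p_out.
- by case: (between y p yB p0 p1); right; rewrite p_out w_gt_y.
- by case: (between x p xB p0 p1); left; rewrite w_lt_x p_out.
Qed.

Lemma common_boundary_separated_angle x y w p : common_boundary x -> common_boundary y ->
  S c w -> S c' w -> H c p -> H c' p -> ~ connected_component common_boundary x y ->
  dot (vsub x p) (vsub y p) <= `|cross (vsub x p) (vsub y p)|.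
Proof.
move=> xB yB w0 w1 p0 p1 not_conn.
have [yx|xy|xy] := ltgtP (cross t y) (cross t x).
- by apply: common_boundary_angle => //; apply: common_boundary_between yx.
- rewrite dotC normr_crossC.
  by apply: common_boundary_angle => //; apply: common_boundary_between xy.
- by case: not_conn; apply: common_boundary_connected.
Qed.

Lemma boundary_polygons :
  boundary (regular_polygon k c r th) `&` boundary (regular_polygon k c' r th) = common_boundary.
Proof.
rewrite /boundary !(interior_polygon th k_ge4 r_gt0) !(closure_polygon th k_ge4 r_gt0).
by apply/seteqP; split=> z; [move=> [[? ?] [? ?]] | move=> [? ? ? ?]].
Qed.

End TranslatedPolygons.

Unset Implicit Arguments.

Theorem lemma8 (R : realType) (k : nat) (sigma : set (R * R)%type) (t : (R * R)%type)
  (p x y : (R * R)%type) :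
  (4 <= k)%N ->
  is_regular_kgon k sigma ->
  sigma <> translate t sigma ->
  interior sigma `&` interior (translate t sigma) !=set0 ->
  (sigma `&` translate t sigma) p ->
  (boundary sigma `&` boundary (translate t sigma)) x ->
  (boundary sigma `&` boundary (translate t sigma)) y ->
  ~ connected_component (boundary sigma `&` boundary (translate t sigma)) x y ->
  p <> x -> p <> y ->
  pi / 4 <= angle x p y.
Proof.
move=> k_ge4 [c [r [th [r_gt0 ->]]]].
rewrite (translate_polygon th k_ge4 r_gt0) => distinct [w [w0 w1]] [p0 p1].
rewrite boundary_polygons // => xB yB not_conn px py.
have t_neq0 : t != (0, 0).
  by apply/eqP => t0; apply: distinct; rewrite t0 /= !addr0 -surjective_pairing.
rewrite !interior_polygon // in w0 w1; rewrite !polygon_halfplanes // in p0 p1.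
apply: angle_ge_pi4 px py _.
exact: (common_boundary_separated_angle k_ge4 r_gt0 t_neq0 xB yB w0 w1 p0 p1 not_conn).
Qed.
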